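(* If $G$ is a graph of order $n$ with diameter $d$ and a resolving set of size $k$, then $n\leq (dk+1)^{dvc^*(G)}+1$.
   Context: A set $R$ of vertices of a graph $G$ is a resolving set if for each pair $u,v$ of distinct vertices there is $x\in R$ with $d(x,u)\neq d(x,v)$. The distance hypergraph $\mathcal{H}(G)$ has vertex set $V(G)$ and, as hyperedges, all balls $B(v,r)=\{u:d(u,v)\leq r\}$ for $v\in V(G)$ and integers $r\geq0$. For a hypergraph, a vertex set $X$ is shattered if every subset of $X$ equals $e\cap X$ for some hyperedge $e$; the VC dimension is the maximum size of a shattered set. The dual hypergraph has the hyperedges as vertices and, for each original vertex $v$, the hyperedge consisting of the original hyperedges containing $v$. The dual distance-VC dimension $dvc^*(G)$ is the VC dimension of the dual of $\mathcal{H}(G)$. *)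

From mathcomp Require Import all_boot all_order.
From mathcomp Require Import boolp.
Set Implicit Arguments. Unset Strict Implicit. Unset Printing Implicit Defensive.

Section Graphs.
Variable T : finType.
Variable e : rel T.

Definition simple_graph : Prop := irreflexive e /\ symmetric e.

Definition connected_graph : Prop := forall x y : T, connect e x y.

Fixpoint wball (x : T) (k : nat) : {set T} :=
  match k with
  | 0 => [set x]
  | k'.+1 => wball x k' :|: [set y | [exists z in wball x k', e z y]]
  end.

(* graph distance: least k with y reachable from x in <= k steps
   (for a connected graph this is the usual shortest-path distance,
    which is always <= #|T| - 1). *)
Definition dist (x y : T) : nat :=
  find (fun k => y \in wball x k) (iota 0 #|T|).

Definition diameter : nat := \max_(x : T) \max_(y : T) dist x y.

Definition resolving (R : {set T}) : Prop :=
  forall u v : T, u != v -> exists2 x, x \in R & dist x u != dist x v.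

Definition ball (v : T) (r : nat) : {set T} := [set u | dist u v <= r].

Definition dist_hyperedge (E : {set T}) : Prop := exists v r, E = ball v r.

(* X, a set of hyperedges of H(G) (= vertices of the dual), is shattered in
   the dual hypergraph: every subset Y of X is the trace on X of the dual
   hyperedge {E | v \in E} of some vertex v. *)
Definition dual_shattered (X : {set {set T}}) : Prop :=
  (forall E, E \in X -> dist_hyperedge E) /\
  forall Y : {set {set T}}, Y \subset X ->
    exists v : T, Y = [set E in X | v \in E].

Definition dvc_star : nat :=
  \max_(X : {set {set T}} | `[< dual_shattered X >]) #|X|.
End Graphs.

From mathcomp Require Import all_boot all_order.
From mathcomp Require Import boolp.
Set Implicit Arguments. Unset Strict Implicit. Unset Printing Implicit Defensive.

(* Let X be the set of balls B(x, r) with x in the resolving set R and r < d,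
   so #|X| <= d k.  Since all distances are at most d and R is resolving, a
   vertex v is determined by its trace {E in X | v in E}: the n traces are
   distinct subsets of X.  By Pajor's lemma a family of n sets shatters at
   least n sets; a set of balls shattered by the traces is shattered in the
   dual of the distance hypergraph, so it has at most dvc*(G) elements.  There
   are at most (#|X| + 1)^dvc*(G) such subsets of X. *)

Section Shattering.
Variable U : finType.
Implicit Types (F : {set {set U}}) (A Y Z : {set U}).

Definition shattered F Y : bool :=
  [forall Z : {set U}, (Z \subset Y) ==> [exists A in F, A :&: Y == Z]].

Lemma shatteredP F Y :
  reflect (forall Z, Z \subset Y -> exists2 A, A \in F & A :&: Y = Z) (shattered F Y).
Proof.
apply: (iffP forallP) => shY Z.
  by move=> ZY; move: (shY Z); rewrite ZY => /exists_inP [A AF /eqP]; exists A.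
apply/implyP => /shY [A AF AY]; apply/exists_inP; exists A => //; exact/eqP.
Qed.

Lemma shattered_subset F Y : shattered F Y -> exists2 A, A \in F & Y \subset A.
Proof. by move/shatteredP/(_ Y (subxx Y)) => [A AF <-]; exists A; rewrite ?subsetIl. Qed.

Lemma shattered_notin F Y a :
  (forall A, A \in F -> a \notin A) -> shattered F Y -> a \notin Y.
Proof.
by move=> Fa /shattered_subset [A /Fa aA YA]; apply: contra aA; apply: (subsetP YA).
Qed.

Lemma shattered0 F : F != set0 -> shattered F set0.
Proof.
case/set0Pn=> A AF; apply/shatteredP => Z; rewrite subset0 => /eqP ->.
by exists A; rewrite ?setI0.
Qed.

(* avoiding :|: removed is F with a deleted from every member, and
   avoiding :&: removed collects the A such that both A and a |: A lie in F. *)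
Section Split.
Variables (F : {set {set U}}) (a : U).

Definition avoiding := [set A : {set U} in F | a \notin A].
Definition removed := [set A :\ a | A : {set U} in F & a \in A].

Lemma card_avoiding_removed :
  #|F| = #|avoiding :|: removed| + #|avoiding :&: removed|.
Proof.
rewrite cardsUI card_in_imset => [|A B]; last first.
  by rewrite !inE => /andP [_ aA] /andP [_ aB] AB; rewrite -(setD1K aA) -(setD1K aB) AB.
rewrite -(cardsID [set A : {set U} | a \in A] F) addnC.
by apply: f_equal2; apply: eq_card => A; rewrite !inE // andbC.
Qed.

Lemma mem_avoiding_removed A :
  A \in avoiding :|: removed -> exists2 B, B \in F & A = B :\ a.
Proof.
case/setUP => [/setIdP [AF aA] | /imsetP [B /setIdP [BF _] ->]]; last by exists B.
by exists A => //; apply/esym/setDidPl; rewrite disjoint_sym disjoints1.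
Qed.

Lemma avoiding_removed_notin A : A \in avoiding :|: removed -> a \notin A.
Proof. by case/mem_avoiding_removed => B _ ->; rewrite setD11. Qed.

Lemma shattered_avoiding_removedU Y :
  a \notin Y -> shattered (avoiding :|: removed) Y -> shattered F Y.
Proof.
move=> aY /shatteredP shY.
apply/shatteredP => Z /shY [A /mem_avoiding_removed [B BF ->] <-].
exists B => //; apply/setP => x; rewrite !inE.
by case: eqP => [->|] //=; rewrite (negbTE aY) !andbF.
Qed.

Lemma shattered_avoiding_removedI Y :
  a \notin Y -> shattered (avoiding :&: removed) Y -> shattered F (a |: Y).
Proof.
move=> aY /shatteredP shY; apply/shatteredP => Z ZaY.
have /shY [A] : Z :\ a \subset Y.
  by apply/subsetP => x /setD1P [xa /(subsetP ZaY)]; rewrite in_setU1 (negbTE xa).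
rewrite inE => /andP [A_avoid /imsetP [B]]; rewrite inE => /andP [BF aB] AB AYZ.
move: A_avoid; rewrite inE => /andP [AF _].
have [aZ|aZ] := boolP (a \in Z); [exists B | exists A] => //; apply/setP => x;
  move/setP/(_ x): AYZ; rewrite AB !inE; case: eqP => [->|] //=.
- by rewrite aB aZ.
- by rewrite (negbTE aZ).
Qed.

Lemma card_shattered_avoiding_removed :
  #|[set Y | shattered (avoiding :|: removed) Y]|
    + #|[set Y | shattered (avoiding :&: removed) Y]|
  <= #|[set Y | shattered F Y]|.
Proof.
set SU := [set Y | _ (_ :|: _) Y]; set SI := [set Y | _ (_ :&: _) Y].
have notinU Y : Y \in SU -> a \notin Y.
  by rewrite inE; apply: shattered_notin; apply: avoiding_removed_notin.
have notinI Y : Y \in SI -> a \notin Y.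
  rewrite inE; apply: shattered_notin => A /setIP [Aa _].
  by apply: avoiding_removed_notin; rewrite inE Aa.
have cardI : #|[set a |: Y | Y in SI]| = #|SI|.
  apply: card_in_imset => Y1 Y2 /notinI aY1 /notinI aY2 eqY.
  by rewrite -(setU1K aY1) -(setU1K aY2) eqY.
have disjUI : SU :&: [set a |: Y | Y in SI] = set0.
  apply/setP => Y; rewrite in_set0; apply/setIP => -[/notinU aY /imsetP [Y' _ EY]].
  by rewrite EY setU11 in aY.
rewrite -cardI -cardsUI disjUI cards0 addn0.
apply/subset_leq_card/subsetP => Y /setUP [YU | /imsetP [Y' Y'I ->]]; rewrite inE.
  by apply: shattered_avoiding_removedU (notinU _ YU) _; rewrite inE in YU.
by apply: shattered_avoiding_removedI (notinI _ Y'I) _; rewrite inE in Y'I.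
Qed.

End Split.

Lemma card_le_shattered F : #|F| <= #|[set Y | shattered F Y]|.
Proof.
suff: forall (S : {set U}) F,
    (forall A, A \in F -> A \subset S) -> #|F| <= #|[set Y | shattered F Y]|.
  by apply => A _; apply: subsetT.
move=> S; have [n] := ubnP #|S|; elim: n S => // n IH S leSn {}F FS.
have [S0 | [a aS]] := set_0Vmem S.
  have [->|F0] := eqVneq F set0; first by rewrite cards0.
  have /subset_leq_card : F \subset [set set0].
    by apply/subsetP => A /FS; rewrite S0 subset0 inE.
  rewrite cards1 => /leq_trans; apply; rewrite card_gt0.
  by apply/set0Pn; exists set0; rewrite inE shattered0.
have ltSan : #|S :\ a| < n by rewrite (cardsD1 a S) aS in leSn.
have sub_Sa A : A \in avoiding F a :|: removed F a -> A \subset S :\ a.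
  by case/mem_avoiding_removed => B /FS BS ->; apply: setSD.
rewrite (card_avoiding_removed F a) (leq_trans _ (card_shattered_avoiding_removed F a)) //.
apply: leq_add; apply: (IH _ ltSan) => A; first exact: sub_Sa.
by move=> /setIP [Aa _]; apply: sub_Sa; rewrite inE Aa.
Qed.

End Shattering.

Lemma card_small_subsets (U : finType) (X : {set U}) (m D : nat) : #|X| <= m ->
  #|[set Y : {set U} | (Y \subset X) && (#|Y| <= D)]| <= (m + 1) ^ D.
Proof.
move=> leXm; elim: D => [|D IH].
  rewrite expn0 -(cards1 (set0 : {set U})); apply/subset_leq_card/subsetP => Y.
  by rewrite !inE leqn0 cards_eq0 => /andP [_ ->].
set L := [set Y : {set U} | (Y \subset X) && (#|Y| <= D)].
have grow : [set Y : {set U} | (Y \subset X) && (#|Y| <= D.+1)]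
            \subset L :|: [set p.2 |: p.1 | p in setX L X].
  apply/subsetP => Y; rewrite !inE => /andP [YX]; rewrite leq_eqVlt ltnS.
  case/orP => [/eqP cardY|->]; last by rewrite YX.
  have /card_gt0P [x xY] : 0 < #|Y| by rewrite cardY.
  apply/orP; right; apply/imsetP; exists (Y :\ x, x); last by rewrite /= setD1K.
  rewrite !inE (subsetP YX x xY) (subset_trans (subsetDl Y [set x]) YX) /= andbT.
  by move: cardY; rewrite (cardsD1 x) xY add1n => -[->].
apply: leq_trans (subset_leq_card grow) _; apply: leq_trans (leq_card_setU _ _) _.
apply: leq_trans (leq_add (leqnn _) (leq_imset_card _ _)) _.
rewrite cardsX expnSr mulnDr muln1 addnC.
by apply: leq_add; rewrite ?leq_mul.
Qed.

Section Walks.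
Variables (T : finType) (e : rel T).
Implicit Types (x y : T) (p : seq T).

Lemma wball_mono x : {homo wball e x : m k / m <= k >-> m \subset k}.
Proof.
move=> m k; elim: k => [|k IH]; first by rewrite leqn0 => /eqP ->.
rewrite leq_eqVlt => /orP [/eqP -> // | /IH mk].
exact: subset_trans mk (subsetUl _ _).
Qed.

Lemma path_wball x p : path e x p -> last x p \in wball e x (size p).
Proof.
elim/last_ind: p => [|p z IH]; first by rewrite inE.
rewrite rcons_path last_rcons size_rcons => /andP [xp ez] /=.
by rewrite !inE; apply/orP; right; apply/exists_inP; exists (last x p); rewrite ?IH.
Qed.

Lemma wballP x k y :
  reflect (exists p, [/\ path e x p, last x p = y & size p <= k]) (y \in wball e x k).
Proof.
apply: (iffP idP) => [|[p [xp <- le_pk]]]; last first.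
  exact: subsetP (wball_mono x le_pk) _ (path_wball xp).
elim: k y => [|k IH] y /=; first by rewrite inE => /eqP ->; exists [::].
case/setUP => [/IH [p [xp <- le_pk]] | ]; first by exists p; rewrite leqW.
rewrite inE => /exists_inP [z /IH [p [xp <- le_pk]] ezy].
by exists (rcons p y); rewrite rcons_path last_rcons size_rcons xp ezy.
Qed.

Hypothesis e_sym : symmetric e.

Lemma wball_sym x y k : (y \in wball e x k) = (x \in wball e y k).
Proof.
wlog suff: x y / y \in wball e x k -> x \in wball e y k.
  by move=> sym_imp; apply/idP/idP; apply: sym_imp.
case/wballP => p [xp <- le_pk]; apply/wballP; exists (rev (belast x p)).
rewrite rev_path size_rev size_belast; split => //.
  by apply: sub_path xp => u v; rewrite e_sym.
by case: p {xp le_pk} => [|z p] //=; rewrite rev_cons last_rcons.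
Qed.

Lemma dist_sym x y : dist e x y = dist e y x.
Proof. by apply: eq_find => i; apply: wball_sym. Qed.

End Walks.

Lemma leq_thresholds_eq (a b d : nat) : a <= d -> b <= d ->
  (forall r, r < d -> (a <= r) = (b <= r)) -> a = b.
Proof.
move=> ad bd thr; apply/eqP; rewrite eqn_leq; apply/andP; split.
  by case: (ltnP b d) => [bd'|/(leq_trans ad)//]; rewrite thr.
by case: (ltnP a d) => [ad'|/(leq_trans bd)//]; rewrite -thr.
Qed.

Section DistanceHypergraph.
Variables (T : finType) (e : rel T).

Lemma dist_le_diameter u v : dist e u v <= diameter e.
Proof. exact: leq_trans (leq_bigmax v) (leq_bigmax u). Qed.

Lemma dual_shattered_le_dvc_star (X : {set {set T}}) :
  dual_shattered e X -> #|X| <= dvc_star e.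
Proof.
by move=> shX; apply: (@leq_bigmax_cond _ _ (fun X : {set {set T}} => #|X|)); apply: asboolT.
Qed.

Definition trace (X : {set {set T}}) (v : T) := [set E in X | v \in E].

Lemma shattered_traces_subset (X Y : {set {set T}}) :
  shattered [set trace X v | v in T] Y -> Y \subset X.
Proof.
case/shattered_subset => _ /imsetP [v _ ->] /subset_trans; apply.
by apply/subsetP => E; rewrite inE => /andP [].
Qed.

Lemma shattered_traces_dual (X Y : {set {set T}}) :
  (forall E, E \in X -> dist_hyperedge e E) ->
  shattered [set trace X v | v in T] Y -> dual_shattered e Y.
Proof.
move=> Xballs shY; have YX := shattered_traces_subset shY.
split=> [E /(subsetP YX) /Xballs // | Z /(shatteredP _ _ shY) [_ /imsetP [v _ ->] <-]].
exists v; apply/setP => E; rewrite !inE andbC.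
by case: (boolP (E \in Y)) => //= /(subsetP YX) ->.
Qed.

Definition balls (R : {set T}) (d : nat) : {set {set T}} :=
  [set ball e x (r : 'I_d) | x in R, r in [set: 'I_d]].

Lemma balls_hyperedges R d E : E \in balls R d -> dist_hyperedge e E.
Proof. by case/imset2P => x r _ _ ->; exists x, r. Qed.

Lemma card_balls R d : #|balls R d| <= d * #|R|.
Proof.
rewrite /balls curry_imset2X (leq_trans (leq_imset_card _ _)) //.
by rewrite cardsX cardsT card_ord mulnC.
Qed.

Hypothesis e_sym : symmetric e.

(* A vertex x of R with dist x u != dist x v separates u from v by the ball of
   radius min (dist x u) (dist x v) < diameter around x. *)
Lemma resolving_trace_balls_inj R :
  resolving e R -> injective (trace (balls R (diameter e))).
Proof.
move=> Rres u v tr_uv; apply/eqP; apply: contraT => /Rres [x xR /eqP neq].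
exfalso; apply: neq.
apply: leq_thresholds_eq (dist_le_diameter _ _) (dist_le_diameter _ _) _ => r lt_rd.
have xr : ball e x r \in balls R (diameter e) by apply/imset2P; exists x (Ordinal lt_rd).
move/setP/(_ (ball e x r)): tr_uv; rewrite !inE xr /=.
by rewrite (dist_sym e_sym u) (dist_sym e_sym v).
Qed.

End DistanceHypergraph.

Theorem proposition4 (T : finType) (e : rel T) (n d k : nat) (R : {set T}) :
  simple_graph e -> connected_graph e ->
  #|T| = n -> diameter e = d ->
  resolving e R -> #|R| = k ->
  n <= (d * k + 1) ^ dvc_star e + 1.
Proof.
move=> [_ e_sym] _ <- dE /(resolving_trace_balls_inj e_sym) tr_inj <-.
set X := balls e R (diameter e); set F := [set trace X v | v in T].
have shF : [set Y | shattered F Y] \subset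
           [set Y : {set {set T}} | (Y \subset X) && (#|Y| <= dvc_star e)].
  apply/subsetP => Y; rewrite !inE => shY.
  rewrite (shattered_traces_subset shY) dual_shattered_le_dvc_star //.
  exact: shattered_traces_dual (@balls_hyperedges _ _ _ _) shY.
rewrite -(card_imset T tr_inj) addn1; apply: leqW.
apply: leq_trans (card_le_shattered F) _; apply: leq_trans (subset_leq_card shF) _.
by apply: card_small_subsets; rewrite -dE card_balls.
Qed.
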